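(* Let $n\in\{24,32,40\}$ and let $C$ be an extremal Type~II $\mathbb{Z}_4$-code of length $n$. Let $v\in\mathbb{F}_2^n$ be a vector of weight $4$ such that $v\notin C^{(1)}$ and the binary code $\langle C^{(1)},v\rangle$ is doubly even. Then there is an extremal Type~II $\mathbb{Z}_4$-code $C'$ of length $n$ with $C'^{(1)}=\langle C^{(1)},v\rangle$.
   Context: A $\mathbb{Z}_4$-code of length $n$ is a $\mathbb{Z}_4$-submodule of $\mathbb{Z}_4^n$; it is self-dual if it equals its dual with respect to $x\cdot y=\sum x_iy_i \pmod 4$. The Euclidean weight of $x$ is $n_1(x)+4n_2(x)+n_3(x)$, $n_\alpha(x)$ being the number of coordinates equal to $\alpha$. A Type~II $\mathbb{Z}_4$-code is a self-dual code all of whose codewords have Euclidean weight divisible by $8$; it is extremal if its minimum Euclidean weight equals $8\lfloor n/24\rfloor+8$. The residue code is $C^{(1)}=\{c\bmod 2: c\in C\}$. For a binary code $B$ and vector $v$, $\langle B,v\rangle$ is the binary code generated by $B$ and $v$. A binary code is doubly even if all its codeword weights are divisible by $4$. *)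

From HB Require Import structures.
From mathcomp Require Import all_boot all_order all_algebra.
Set Implicit Arguments. Unset Strict Implicit. Unset Printing Implicit Defensive.
Import GRing.Theory.
Local Open Scope ring_scope.

Notation Z4 := 'Z_4.
Notation F2 := 'F_2.

Definition is_z4code (n : nat) (C : {set 'rV[Z4]_n}) : Prop :=
  (0 \in C) /\ (forall x y, x \in C -> y \in C -> x + y \in C) /\
  (forall (a : Z4) x, x \in C -> a *: x \in C).

Definition dotZ4 (n : nat) (x y : 'rV[Z4]_n) : Z4 := \sum_(i < n) x 0 i * y 0 i.

Definition dual_code (n : nat) (C : {set 'rV[Z4]_n}) : {set 'rV[Z4]_n} :=
  [set x | [forall y in C, dotZ4 x y == 0]].

Definition self_dual (n : nat) (C : {set 'rV[Z4]_n}) : Prop :=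
  is_z4code C /\ C = dual_code C.

Definition n_alpha (n : nat) (a : Z4) (x : 'rV[Z4]_n) : nat :=
  #|[set i : 'I_n | x 0 i == a]|.

Definition z4_1 : Z4 := 1.
Definition z4_2 : Z4 := 2%:R.
Definition z4_3 : Z4 := 3%:R.

Definition euclid_wt (n : nat) (x : 'rV[Z4]_n) : nat :=
  (n_alpha z4_1 x + 4 * n_alpha z4_2 x + n_alpha z4_3 x)%N.

Definition typeII (n : nat) (C : {set 'rV[Z4]_n}) : Prop :=
  self_dual C /\ (forall x, x \in C -> (8 %| euclid_wt x)%N).

Definition extremal_typeII (n : nat) (C : {set 'rV[Z4]_n}) : Prop :=
  typeII C /\
  (forall x, x \in C -> x != 0 -> (8 * (n %/ 24) + 8 <= euclid_wt x)%N) /\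
  (exists2 x, x \in C & (x != 0) /\ euclid_wt x = (8 * (n %/ 24) + 8)%N).

Definition red2 (a : Z4) : F2 := ((a : nat) %% 2)%:R.

Definition residue (n : nat) (C : {set 'rV[Z4]_n}) : {set 'rV[F2]_n} :=
  [set map_mx red2 x | x in C].

Definition is_binary_code (n : nat) (B : {set 'rV[F2]_n}) : Prop :=
  (0 \in B) /\ (forall x y, x \in B -> y \in B -> x + y \in B).

Definition gen_code (n : nat) (B : {set 'rV[F2]_n}) (v : 'rV[F2]_n) : {set 'rV[F2]_n} :=
  \bigcap_(D : {set 'rV[F2]_n} | [&& (0 \in D),
        [forall x in D, forall y in D, x + y \in D],
        B \subset D & v \in D]) D.

Definition bwt (n : nat) (v : 'rV[F2]_n) : nat := #|[set i : 'I_n | v 0 i != 0]|.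

Definition doubly_even (n : nat) (B : {set 'rV[F2]_n}) : Prop :=
  forall x, x \in B -> (4 %| bwt x)%N.

From mathcomp Require Import all_boot all_order all_algebra zify.
Set Implicit Arguments. Unset Strict Implicit. Unset Printing Implicit Defensive.
Import GRing.Theory.
Local Open Scope ring_scope.

(* Let vh in {0,1}^n be the lift of v.  Since <C^(1), v> is doubly even, v is
   orthogonal to C^(1), so vh . c lies in 2Z_4 for every c in C.  The code
     C' = {c in C | vh . c = 0}  U  (vh + {c in C | vh . c = 2})
   is then again self-dual (it is the "neighbour" of C through vh).  The
   hypothesis v \notin C^(1) yields a codeword z with z mod 2 = 0 and
   vh . z = 2: otherwise c mod 2 |-> (vh . c)/2 would be an additive, hence
   linear, functional on C^(1), represented by some w, and vh + 2w would lie in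
   C.  Using z one checks that C' has residue <C^(1), v>.  Finally the weights
   of vh + c are 0 mod 8 (as wt(vh) = 4 and vh . c = 2) and are at least
   d - 4 whenever C has minimum weight d, because
   wt(x + vh) + wt(x - vh) <= 2 wt(x) + 2 wt(v); so the minimum stays d = 16,
   attained by 2 vh. *)

Lemma Z4_ind (P : Z4 -> Prop) : P 0 -> P 1 -> P 2%:R -> P 3%:R -> forall a, P a.
Proof.
move=> P0 P1 P2 P3 [[|[|[|[|m]]]] lt_m4] //.
- by have -> : Ordinal lt_m4 = 0 by apply/val_inj.
- by have -> : Ordinal lt_m4 = 1 by apply/val_inj.
- by have -> : Ordinal lt_m4 = 2%:R by apply/val_inj.
- by have -> : Ordinal lt_m4 = 3%:R by apply/val_inj.
Qed.

Lemma F2_ind (P : F2 -> Prop) : P 0 -> P 1 -> forall a, P a.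
Proof.
move=> P0 P1 [[|[|m]] lt_m2] //.
- by have -> : Ordinal lt_m2 = 0 by apply/val_inj.
- by have -> : Ordinal lt_m2 = 1 by apply/val_inj.
Qed.

Ltac by_computation := vm_compute; intros; try apply/eqP; vm_compute; by [].

Definition lift2 (b : F2) : Z4 := (val b)%:R.
Definition ewt (a : Z4) : nat := ((a == z4_1) + 4 * (a == z4_2) + (a == z4_3))%N.
Definition even_z4 (a : Z4) : bool := (a == 0) || (a == z4_2).
Definition half2 (a : Z4) : F2 := (a == z4_2)%:R.

Lemma red2D (a b : Z4) : red2 (a + b) = red2 a + red2 b.
Proof. by elim/Z4_ind: a; elim/Z4_ind: b; by_computation. Qed.
Lemma red2M (a b : Z4) : red2 (a * b) = red2 a * red2 b.
Proof. by elim/Z4_ind: a; elim/Z4_ind: b; by_computation. Qed.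
Lemma red2N (a : Z4) : red2 (- a) = - red2 a.
Proof. by elim/Z4_ind: a; by_computation. Qed.
Lemma red20 : red2 0 = 0.
Proof. by_computation. Qed.
Lemma red2_lift (b : F2) : red2 (lift2 b) = b.
Proof. by elim/F2_ind: b; by_computation. Qed.
Lemma lift2_sq (b : F2) : lift2 b * lift2 b = ((b != 0) : nat)%:R.
Proof. by elim/F2_ind: b; by_computation. Qed.
Lemma ewt_lift (b : F2) : ewt (lift2 b) = (b != 0).
Proof. by elim/F2_ind: b; by_computation. Qed.
Lemma ewt_double_lift (b : F2) : ewt (lift2 b + lift2 b) = (4 * (b != 0%R))%N.
Proof. by elim/F2_ind: b; by_computation. Qed.

(* ewt(a + b) = ewt a + ewt b + 2 ab (mod 8): the symbolwise form of the
   identity wt(x + y) = wt x + wt y + 2 x.y (mod 8). *)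
Lemma ewtD_mod (a b : Z4) : ewt (a + b) = (ewt a + ewt b + 2 * val (a * b)) %[mod 8].
Proof. by elim/Z4_ind: a; elim/Z4_ind: b; by_computation. Qed.

Lemma ewt_shift (a : Z4) (b : F2) :
  (ewt (a + lift2 b)%R + ewt (a - lift2 b)%R <= 2 * ewt a + 2 * (b != 0%R))%N.
Proof. by elim/Z4_ind: a; elim/F2_ind: b; by_computation. Qed.

Lemma red2_eq0 (a : Z4) : red2 a = 0 -> even_z4 a.
Proof. by elim/Z4_ind: a => /eqP; by_computation. Qed.
Lemma even_z4_double (a : Z4) : even_z4 a -> a + a = 0.
Proof. by elim/Z4_ind: a; by_computation. Qed.
Lemma double_eq0 (a : Z4) : a + a = 0 -> even_z4 a.
Proof. by elim/Z4_ind: a => /eqP; by_computation. Qed.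
Lemma half2D (a b : Z4) : even_z4 a -> even_z4 b -> half2 (a + b) = half2 a + half2 b.
Proof. by elim/Z4_ind: a; elim/Z4_ind: b; by_computation. Qed.

Lemma cancel_even (d t : Z4) : even_z4 d -> red2 t = half2 d -> d + (t + t) = 0.
Proof. by elim/Z4_ind: d; elim/Z4_ind: t => ? /eqP; by_computation. Qed.

Lemma F2_double (b : F2) : b + b = 0.
Proof. by elim/F2_ind: b; by_computation. Qed.
Lemma F2_nat (b : F2) : b = ((b != 0) : nat)%:R.
Proof. by elim/F2_ind: b; by_computation. Qed.
(* Symbolwise form of |u + w| + 2 |u * w| = |u| + |w| for binary vectors. *)
Lemma F2_card_mul (b c : F2) :
  ((b + c != 0)%R + 2 * (b * c != 0)%R = (b != 0)%R + (c != 0)%R)%N.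
Proof. by elim/F2_ind: b; elim/F2_ind: c; by_computation. Qed.
Lemma Z4_val (a : Z4) : (val a)%:R = a.
Proof. by elim/Z4_ind: a; by_computation. Qed.
Lemma z4_2D : z4_2 + z4_2 = 0.
Proof. by_computation. Qed.
Lemma oppr_z4_2 : - z4_2 = z4_2.
Proof. by_computation. Qed.
Lemma z4_2_neq0 : z4_2 != 0.
Proof. by_computation. Qed.

Definition lift2v n (u : 'rV[F2]_n) : 'rV[Z4]_n := map_mx lift2 u.
Local Notation resv x := (map_mx red2 x).
Definition bdot n (u w : 'rV[F2]_n) : F2 := \sum_i u ord0 i * w ord0 i.

Section Vectors.
Variable n : nat.
Implicit Types (x y z : 'rV[Z4]_n) (u w : 'rV[F2]_n).

Lemma dotC x y : dotZ4 x y = dotZ4 y x.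
Proof. by apply: eq_bigr => i _; rewrite mulrC. Qed.
Lemma dotDl x y z : dotZ4 (x + y) z = dotZ4 x z + dotZ4 y z.
Proof. by rewrite /dotZ4 -big_split; apply: eq_bigr => i _; rewrite !mxE mulrDl. Qed.
Lemma dotDr x y z : dotZ4 z (x + y) = dotZ4 z x + dotZ4 z y.
Proof. by rewrite dotC dotDl !(dotC z). Qed.
Lemma dotNl x y : dotZ4 (- x) y = - dotZ4 x y.
Proof. by rewrite /dotZ4 -sumrN; apply: eq_bigr => i _; rewrite !mxE mulNr. Qed.
Lemma dotBl x y z : dotZ4 (x - y) z = dotZ4 x z - dotZ4 y z.
Proof. by rewrite dotDl dotNl. Qed.
Lemma dotBr x y z : dotZ4 z (x - y) = dotZ4 z x - dotZ4 z y.
Proof. by rewrite !(dotC z) dotBl. Qed.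
Lemma dot0r x : dotZ4 x 0 = 0.
Proof. by rewrite /dotZ4 big1 // => i _; rewrite mxE mulr0. Qed.

Lemma resD x y : resv (x + y) = resv x + resv y.
Proof. by apply/matrixP => i j; rewrite !mxE red2D. Qed.
Lemma resN x : resv (- x) = - resv x.
Proof. by apply/matrixP => i j; rewrite !mxE red2N. Qed.
Lemma res0 : resv (0 : 'rV[Z4]_n) = 0.
Proof. by apply/matrixP => i j; rewrite !mxE red20. Qed.
Lemma res_lift u : resv (lift2v u) = u.
Proof. by apply/matrixP => i j; rewrite !mxE red2_lift (ord1 i). Qed.
Lemma res_dot x y : red2 (dotZ4 x y) = bdot (resv x) (resv y).
Proof.
rewrite /dotZ4 (big_morph red2 red2D red20).
by apply: eq_bigr => i _; rewrite !mxE red2M.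
Qed.

Lemma res_eq0_double x : resv x = 0 -> x + x = 0.
Proof.
move=> x0; apply/matrixP => i j; rewrite !mxE even_z4_double //.
by apply: red2_eq0; have := congr1 (fun m : 'rV[F2]_n => m i j) x0; rewrite !mxE.
Qed.

Lemma F2v_double u : u + u = 0.
Proof. by apply/matrixP => i j; rewrite !mxE F2_double. Qed.
Lemma bdotC u w : bdot u w = bdot w u.
Proof. by apply: eq_bigr => i _; rewrite mulrC. Qed.

Lemma card_predE (P : pred 'I_n) : #|[set i | P i]| = (\sum_i P i)%N.
Proof. by rewrite -sum1_card big_mkcond; apply: eq_bigr => i _; rewrite inE; case: (P i). Qed.

Lemma euclid_wtE x : euclid_wt x = (\sum_i ewt (x ord0 i))%N.
Proof. by rewrite /euclid_wt /n_alpha !card_predE big_distrr -!big_split. Qed.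
Lemma bwtE u : bwt u = (\sum_i (u ord0 i != 0)%R)%N.
Proof. by rewrite /bwt card_predE. Qed.

Lemma euclid_wt_lift u : euclid_wt (lift2v u) = bwt u.
Proof. by rewrite euclid_wtE bwtE; apply: eq_bigr => i _; rewrite mxE ewt_lift. Qed.
Lemma euclid_wt_double_lift u : euclid_wt (lift2v u + lift2v u) = (4 * bwt u)%N.
Proof.
by rewrite euclid_wtE bwtE big_distrr; apply: eq_bigr => i _; rewrite !mxE ewt_double_lift.
Qed.
Lemma dot_lift u : dotZ4 (lift2v u) (lift2v u) = (bwt u)%:R.
Proof. by rewrite /dotZ4 bwtE natr_sum; apply: eq_bigr => i _; rewrite !mxE lift2_sq. Qed.
Lemma euclid_wt0 : euclid_wt (0 : 'rV[Z4]_n) = 0%N.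
Proof. by rewrite euclid_wtE big1 // => i _; rewrite mxE. Qed.

Lemma val_sum (f : 'I_n -> Z4) : val (\sum_i f i) = ((\sum_i val (f i)) %% 4)%N.
Proof.
apply: (big_rec2 (fun (a : Z4) b => val a = b %% 4)%N) => // i a b _ IH.
by rewrite -modnDmr -IH.
Qed.

Lemma euclid_wtD_mod x y :
  euclid_wt (x + y) = (euclid_wt x + euclid_wt y + 2 * val (dotZ4 x y)) %[mod 8].
Proof.
rewrite !euclid_wtE val_sum muln_modr (_ : (2 * 4 = 8)%N) // modnDmr.
rewrite -big_split big_distrr -big_split /= -[LHS]modn_summ -[RHS]modn_summ.
by congr (_ %% 8)%N; apply: eq_bigr => i _; rewrite !mxE ewtD_mod.
Qed.

Lemma euclid_wt_shift x u :
  (euclid_wt (x + lift2v u) + euclid_wt (x - lift2v u) <= 2 * euclid_wt x + 2 * bwt u)%N.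
Proof.
rewrite !euclid_wtE bwtE -big_split !big_distrr -big_split /=.
by apply: leq_sum => i _; rewrite !mxE ewt_shift.
Qed.

(* Two binary vectors whose weights and whose sum's weight are all divisible
   by 4 are orthogonal: |u + w| = |u| + |w| - 2|u * w|. *)
Lemma bdot_doubly_even u w :
  (4 %| bwt u)%N -> (4 %| bwt w)%N -> (4 %| bwt (u + w))%N -> bdot u w = 0.
Proof.
set s := (\sum_i (u ord0 i * w ord0 i != 0)%R)%N.
have card_sum : (bwt (u + w) + 2 * s = bwt u + bwt w)%N.
  by rewrite !bwtE big_distrr -!big_split; apply: eq_bigr => i _; rewrite !mxE; exact: F2_card_mul.
have even_s : (4 %| bwt u)%N -> (4 %| bwt w)%N -> (4 %| bwt (u + w))%N -> (2 %| s)%N.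
  move: card_sum => /[swap] /dvdnP[k ->] /[swap] /dvdnP[l ->] /[swap] /dvdnP[m ->] eq_s.
  by apply/dvdnP; exists (k + l - m)%N; lia.
move=> /even_s /[apply] /[apply] /dvdnP[k s_eq].
rewrite /bdot (eq_bigr (fun i => (((u ord0 i * w ord0 i != 0)%R : nat)%:R))).
  by rewrite -natr_sum -/s s_eq natrM (_ : 2%:R = 0 :> F2) ?mulr0 //; by_computation.
by move=> i _; rewrite -F2_nat.
Qed.

End Vectors.

Lemma dualP n (C : {set 'rV[Z4]_n}) x :
  reflect (forall y, y \in C -> dotZ4 x y = 0) (x \in dual_code C).
Proof. by rewrite inE; apply: (iffP forall_inP) => H y /H => [/eqP|->]. Qed.

Section SelfDual.
Variables (n : nat) (C : {set 'rV[Z4]_n}).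
Hypothesis C_sd : self_dual C.

Lemma sd_zero : 0 \in C.
Proof. by case: C_sd => [[]]. Qed.
Lemma sd_add x y : x \in C -> y \in C -> x + y \in C.
Proof. by case: C_sd => [[_ [CD _]] _]; apply: CD. Qed.
Lemma sd_opp x : x \in C -> - x \in C.
Proof. by case: C_sd => [[_ [_ CZ]] _] xC; rewrite -scaleN1r CZ. Qed.
Lemma sd_orth x y : x \in C -> y \in C -> dotZ4 x y = 0.
Proof. by case: C_sd => _ Cdual; rewrite {1}Cdual => /dualP; apply. Qed.
Lemma sd_mem x : (forall y, y \in C -> dotZ4 x y = 0) -> x \in C.
Proof. by case: C_sd => _ Cdual orth; rewrite Cdual; apply/dualP. Qed.

End SelfDual.

Lemma gen_code_sub n (B : {set 'rV[F2]_n}) v x : x \in B -> x \in gen_code B v.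
Proof. by move=> xB; apply/bigcapP => D /and4P[_ _ /subsetP /(_ x xB)]. Qed.
Lemma gen_code_v n (B : {set 'rV[F2]_n}) v : v \in gen_code B v.
Proof. by apply/bigcapP => D /and4P[]. Qed.
Lemma gen_code_add n (B : {set 'rV[F2]_n}) v x y :
  x \in gen_code B v -> y \in gen_code B v -> x + y \in gen_code B v.
Proof.
move=> /bigcapP xD /bigcapP yD; apply/bigcapP => D D_code.
case/and4P: (D_code) => _ /forall_inP D_add _ _.
by move/forall_inP: (D_add _ (xD D D_code)); apply; apply: yD.
Qed.

Lemma additive0 n (B : {set 'rV[F2]_n}) (h : 'rV[F2]_n -> F2) :
  0 \in B -> (forall x y, x \in B -> y \in B -> h (x + y) = h x + h y) -> h 0 = 0.
Proof. by move=> B0 hD; apply: (addIr (h 0)); rewrite add0r -hD ?addr0. Qed.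

Lemma additive_lincomb n (B : {set 'rV[F2]_n}) (h : 'rV[F2]_n -> F2) k
    (s : 'I_k -> 'rV[F2]_n) (t : 'I_k -> F2) :
  0 \in B -> (forall x y, x \in B -> y \in B -> x + y \in B) ->
  (forall x y, x \in B -> y \in B -> h (x + y) = h x + h y) ->
  (forall i, s i \in B) -> h (\sum_i t i *: s i) = \sum_i t i * h (s i).
Proof.
move=> B0 BD hD sB.
have h0 := additive0 B0 hD.
suff [] : (\sum_i t i *: s i) \in B /\ h (\sum_i t i *: s i) = \sum_i t i * h (s i) by [].
apply: (big_ind2 (fun x y => x \in B /\ h x = y)) => //.
- by move=> x1 y1 x2 y2 [x1B <-] [x2B <-]; rewrite BD ?hD.
- by move=> i _; elim/F2_ind: (t i); rewrite ?scale0r ?scale1r ?mul0r ?mul1r.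
Qed.

Lemma additive_bdot n (B : {set 'rV[F2]_n}) (h : 'rV[F2]_n -> F2) :
  0 \in B -> (forall x y, x \in B -> y \in B -> x + y \in B) ->
  (forall x y, x \in B -> y \in B -> h (x + y) = h x + h y) ->
  exists w : 'rV[F2]_n, forall a, a \in B -> h a = bdot a w.
Proof.
move=> B0 BD hD; set s := enum B; set k := size s.
have sB (i : 'I_k) : s`_i \in B by rewrite -mem_enum mem_nth.
pose M : 'M[F2]_(k, n) := \matrix_(i, j) (s`_i) 0 j.
pose g : 'rV[F2]_k := \row_i h s`_i.
(* g lies in the row space of M^T: it is killed by the cokernel of M^T. *)
have /submxP[w gE] : (g <= M^T)%MS.
  rewrite submxE; apply/eqP/matrixP => r j; rewrite !mxE.
  set Z := cokermx M^T.
  have rel0 : \sum_(i < k) Z i j *: s`_i = 0.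
    apply/matrixP => r' c; rewrite summxE !mxE.
    transitivity ((M^T *m Z) c j); last by rewrite mulmx_coker mxE.
    by rewrite !mxE; apply: eq_bigr => i _; rewrite !mxE (ord1 r') mulrC.
  transitivity (h (\sum_(i < k) Z i j *: s`_i)); last by rewrite rel0 (additive0 B0 hD).
  rewrite (additive_lincomb (fun i => Z i j) B0 BD hD sB).
  by apply: eq_bigr => i _; rewrite mxE mulrC.
exists w => a aB; have ai : (index a s < k)%N by rewrite index_mem mem_enum.
have := congr1 (fun m : 'rV[F2]_k => m 0 (Ordinal ai)) gE.
rewrite !mxE /= nth_index ?mem_enum // => ->.
by apply: eq_bigr => j _; rewrite !mxE nth_index ?mem_enum // mulrC.
Qed.

Section Neighbour.
Variables (n : nat) (C : {set 'rV[Z4]_n}) (v : 'rV[F2]_n).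
Hypothesis C_sd : self_dual C.
Hypothesis v_notin : v \notin residue C.
Hypothesis gen_de : doubly_even (gen_code (residue C) v).

Local Notation vh := (lift2v v).

(* vh . vh = wt(v) = 0 (mod 4). *)
Lemma dot_vv : dotZ4 vh vh = 0.
Proof.
rewrite dot_lift; have /dvdnP[k ->] := gen_de (gen_code_v (residue C) v).
by rewrite natrM (_ : 4%:R = 0 :> Z4) ?mulr0 //; by_computation.
Qed.

(* v is orthogonal to C^(1), so vh . c lies in 2Z_4 for every c in C. *)
Lemma dot_v_even c : c \in C -> even_z4 (dotZ4 vh c).
Proof.
move=> cC; apply: red2_eq0; rewrite res_dot res_lift.
have resC : resv c \in gen_code (residue C) v by apply/gen_code_sub/imset_f.
apply: bdot_doubly_even; apply: gen_de => //; first exact: gen_code_v.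
exact: gen_code_add (gen_code_v _ _) resC.
Qed.

Lemma double_v_in_C : vh + vh \in C.
Proof. by apply: sd_mem => // c cC; rewrite dotDl even_z4_double ?dot_v_even. Qed.

(* If vh . c vanishes on every c in C with zero residue, then c mod 2 |->
   (vh . c)/2 is a well-defined additive functional on C^(1), hence the inner
   product with some binary vector w. *)
Lemma half_dot_functional :
  (forall c, c \in C -> resv c = 0 -> dotZ4 vh c = 0) ->
  exists w, forall c, c \in C -> half2 (dotZ4 vh c) = bdot (resv c) w.
Proof.
move=> ker0.
have dot_res c c' : c \in C -> c' \in C -> resv c = resv c' -> dotZ4 vh c = dotZ4 vh c'.
  move=> cC c'C res_eq; apply/eqP; rewrite -subr_eq0 -dotBr; apply/eqP/ker0.
    by rewrite sd_add ?sd_opp.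
  by rewrite resD resN res_eq subrr.
pose h a := if [pick c in C | resv c == a] is Some c then half2 (dotZ4 vh c) else 0.
have hE c : c \in C -> h (resv c) = half2 (dotZ4 vh c).
  move=> cC; rewrite /h; case: pickP => [c' /andP[c'C /eqP res_eq] | none].
    by rewrite (dot_res c' c).
  by have := none c; rewrite cC eqxx.
have [w hw] : exists w, forall a, a \in residue C -> h a = bdot a w.
  apply: additive_bdot.
  - by rewrite -(res0 n) imset_f // sd_zero.
  - by move=> _ _ /imsetP[c cC ->] /imsetP[c' c'C ->]; rewrite -resD imset_f // sd_add.
  - move=> _ _ /imsetP[c cC ->] /imsetP[c' c'C ->].
    by rewrite -resD !hE ?sd_add // dotDr half2D ?dot_v_even.
by exists w => c cC; rewrite -hE // hw // imset_f.
Qed.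

(* The key use of v \notin C^(1): some codeword z with zero residue has
   vh . z = 2.  Otherwise, with w as above, vh + 2 lift(w) would be orthogonal
   to C, hence a codeword with residue v. *)
Lemma exists_z : exists2 z, z \in C & resv z = 0 /\ dotZ4 vh z = z4_2.
Proof.
have [/exists_inP[z zC /andP[/eqP z0 /eqP zv]] | /exists_inPn none] :=
  boolP [exists z in C, (resv z == 0) && (dotZ4 vh z == z4_2)]; first by exists z.
have ker0 c : c \in C -> resv c = 0 -> dotZ4 vh c = 0.
  move=> cC c0; have := none c cC; rewrite c0 eqxx /=.
  by case/orP: (dot_v_even cC) => /eqP -> //; rewrite eqxx.
have [w hw] := half_dot_functional ker0.
have vwC : vh + (lift2v w + lift2v w) \in C.
  apply: sd_mem => // c cC; rewrite !dotDl; apply: cancel_even; first exact: dot_v_even.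
  by rewrite res_dot res_lift bdotC hw.
case/negP: v_notin; apply/imsetP; exists (vh + (lift2v w + lift2v w)) => //.
by rewrite !resD !res_lift F2v_double addr0.
Qed.

(* The neighbour of C through vh: C_0 U (vh + C_2), where C_a is the set of
   codewords c with vh . c = a. *)
Definition neighbour : {set 'rV[Z4]_n} :=
  [set x | ((x \in C) && (dotZ4 vh x == 0)) ||
           ((x - vh \in C) && (dotZ4 vh (x - vh) == z4_2))].

Lemma neighbour_C0 c : c \in C -> dotZ4 vh c = 0 -> c \in neighbour.
Proof. by move=> cC c0; rewrite inE cC c0 eqxx. Qed.

Lemma neighbour_C2 c : c \in C -> dotZ4 vh c = z4_2 -> vh + c \in neighbour.
Proof. by move=> cC c2; rewrite inE addrC addrK cC c2 eqxx orbT. Qed.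

Lemma neighbourP x : x \in neighbour ->
  (x \in C /\ dotZ4 vh x = 0) \/ exists2 c, c \in C & dotZ4 vh c = z4_2 /\ x = vh + c.
Proof.
rewrite inE => /orP[/andP[xC /eqP x0] | /andP[xC /eqP x2]]; first by left.
by right; exists (x - vh) => //; split; rewrite // addrC subrK.
Qed.

Lemma neighbour_add x y : x \in neighbour -> y \in neighbour -> x + y \in neighbour.
Proof.
move=> /neighbourP[[xC x0] | [c cC [c2 ->]]] /neighbourP[[yC y0] | [c' c'C [c'2 ->]]].
- by apply: neighbour_C0; rewrite ?sd_add // dotDr x0 y0 addr0.
- by rewrite addrCA; apply: neighbour_C2; rewrite ?sd_add // dotDr x0 c'2 add0r.
- by rewrite -addrA; apply: neighbour_C2; rewrite ?sd_add // dotDr y0 c2 addr0.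
- rewrite addrACA; apply: neighbour_C0; first exact: (sd_add C_sd double_v_in_C (sd_add C_sd cC c'C)).
  by rewrite !dotDr dot_vv c2 c'2 z4_2D !addr0.
Qed.

Lemma neighbour_code : is_z4code neighbour.
Proof.
have N0 : 0 \in neighbour by rewrite neighbour_C0 ?sd_zero // dot0r.
split=> //; split=> [|a x xN]; first exact: neighbour_add.
rewrite -(Z4_val a) scaler_nat; elim: (val a) => [|m IH]; first by rewrite mulr0n.
by rewrite mulrS neighbour_add.
Qed.

Lemma neighbour_orth x y : x \in neighbour -> y \in neighbour -> dotZ4 x y = 0.
Proof.
have orth := sd_orth C_sd.
move=> /neighbourP[[xC x0] | [c cC [c2 ->]]] /neighbourP[[yC y0] | [c' c'C [c'2 ->]]].
- exact: orth.
- by rewrite dotDr dotC x0 add0r orth.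
- by rewrite dotDl y0 add0r orth.
- by rewrite !dotDl !dotDr dot_vv c'2 (dotC c vh) c2 orth // add0r addr0 z4_2D.
Qed.

(* Conversely every vector orthogonal to the neighbour lies in it: its inner
   product with z is 0 or 2, and accordingly it lies in C_0 or in vh + C_2. *)
Lemma neighbour_dual x : (forall y, y \in neighbour -> dotZ4 x y = 0) -> x \in neighbour.
Proof.
move=> xorth; have [z zC [z0 z2]] := exists_z.
have x_C0 c : c \in C -> dotZ4 vh c = 0 -> dotZ4 x c = 0.
  by move=> cC c0; rewrite xorth ?neighbour_C0.
have x_C2 c : c \in C -> dotZ4 vh c = z4_2 -> dotZ4 x c = - dotZ4 x z.
  move=> cC c2; apply/eqP; rewrite -subr_eq0 opprK -dotDr; apply/eqP/x_C0.
    by rewrite sd_add.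
  by rewrite dotDr c2 z2 z4_2D.
have xvz : dotZ4 x (vh + z) = 0 by rewrite xorth ?neighbour_C2.
have /double_eq0 : dotZ4 x z + dotZ4 x z = 0 by rewrite -dotDr res_eq0_double // dot0r.
case/orP=> /eqP xz.
  apply: neighbour_C0; last by rewrite dotC -xvz dotDr xz addr0.
  apply: sd_mem => // c cC; case/orP: (dot_v_even cC) => /eqP cv.
    exact: x_C0.
  by rewrite x_C2 // xz oppr0.
rewrite -(subrK vh x) addrC neighbour_C2 //.
  apply: sd_mem => // c cC; rewrite dotBl; case/orP: (dot_v_even cC) => /eqP cv.
    by rewrite x_C0 // cv subrr.
  by rewrite x_C2 // xz cv oppr_z4_2 z4_2D.
rewrite dotBr dot_vv subr0 dotC; apply: (addIr (dotZ4 x z)).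
by rewrite -dotDr xvz xz z4_2D.
Qed.

Lemma neighbour_self_dual : self_dual neighbour.
Proof.
split; first exact: neighbour_code.
apply/setP => x; apply/idP/dualP; first by move=> xN y; apply: neighbour_orth.
exact: neighbour_dual.
Qed.

(* The residue of the neighbour is <C^(1), v>: residues of C_0 and of vh + C_2
   lie there, and conversely C^(1) = res C_0 (shifting c in C_2 by z) and
   v = res (vh + z). *)
Lemma residue_neighbour : residue neighbour = gen_code (residue C) v.
Proof.
have [z zC [z0 z2]] := exists_z.
apply/eqP; rewrite eqEsubset; apply/andP; split.
  apply/subsetP => _ /imsetP[x /neighbourP[[xC _] | [c cC [_ ->]]] ->].
    exact/gen_code_sub/imset_f.
  by rewrite resD res_lift gen_code_add ?gen_code_v ?gen_code_sub ?imset_f.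
apply: bigcap_inf; apply/and4P; split.
- by rewrite -(res0 n) imset_f // (neighbour_code.1).
- apply/forall_inP => _ /imsetP[x xN ->]; apply/forall_inP => _ /imsetP[y yN ->].
  by rewrite -resD imset_f ?neighbour_add.
- apply/subsetP => _ /imsetP[c cC ->].
  case/orP: (dot_v_even cC) => /eqP cv; first by rewrite imset_f ?neighbour_C0.
  rewrite (_ : resv c = resv (c + z)); last by rewrite resD z0 addr0.
  by rewrite imset_f // neighbour_C0 ?sd_add // dotDr cv z2 z4_2D.
- rewrite (_ : v = resv (vh + z)); last by rewrite resD z0 addr0 res_lift.
  by rewrite imset_f ?neighbour_C2.
Qed.

Hypothesis C_typeII : forall c, c \in C -> (8 %| euclid_wt c)%N.
Hypothesis v_wt : bwt v = 4%N.

Lemma neighbour_typeII : typeII neighbour.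
Proof.
split; first exact: neighbour_self_dual.
move=> x /neighbourP[[xC _] | [c cC [c2 ->]]]; first exact: C_typeII.
rewrite /dvdn euclid_wtD_mod c2 euclid_wt_lift v_wt (_ : val z4_2 = 2%N) //.
by case/dvdnP: (C_typeII cC) => k ->; apply/eqP; lia.
Qed.

(* For x = vh + c, both x - vh = c and x + vh = 2vh + c are nonzero codewords,
   so 2d <= 2 wt(x) + 2 wt(v); together with 8 | wt(x) this gives d <= wt(x). *)
Lemma neighbour_min_wt d :
  (8 %| d)%N -> (forall c, c \in C -> c != 0 -> (d <= euclid_wt c)%N) ->
  forall x, x \in neighbour -> x != 0 -> (d <= euclid_wt x)%N.
Proof.
move=> d8 C_min x xN x0; have x8 := neighbour_typeII.2 x xN.
case/neighbourP: xN x0 x8 => [[xC _] | [c cC [c2 ->]]] x0 x8; first exact: C_min.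
have c0 : c != 0.
  by apply/eqP => c_eq0; move: z4_2_neq0; rewrite -c2 c_eq0 dot0r eqxx.
have vvc0 : vh + vh + c != 0.
  apply/eqP => /(congr1 (dotZ4 vh)); rewrite !dotDr dot_vv c2 !add0r dot0r => z2_0.
  by move: z4_2_neq0; rewrite z2_0 eqxx.
have lo1 : (d <= euclid_wt (vh + c - vh))%N by rewrite addrC addKr C_min.
have lo2 : (d <= euclid_wt (vh + c + vh))%N.
  by rewrite addrAC; apply: C_min vvc0; exact: (sd_add C_sd double_v_in_C cC).
have := euclid_wt_shift (vh + c) v; rewrite v_wt.
case/dvdnP: x8 => k ->; case/dvdnP: d8 => l dE; rewrite dE in lo1 lo2 *; lia.
Qed.

Lemma double_v_neighbour :
  vh + vh \in neighbour /\ vh + vh != 0 /\ euclid_wt (vh + vh) = 16%N.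
Proof.
have vv_wt : euclid_wt (vh + vh) = 16%N by rewrite euclid_wt_double_lift v_wt.
split; first by apply: neighbour_C0 double_v_in_C _; rewrite dotDr dot_vv addr0.
by split=> //; apply/eqP => vv0; move: vv_wt; rewrite vv0 euclid_wt0.
Qed.

End Neighbour.

Theorem mainTheorem3 (n : nat) (C : {set 'rV['Z_4]_n}) (v : 'rV['F_2]_n) :
  n \in [:: 24%N; 32%N; 40%N] ->
  extremal_typeII C ->
  bwt v = 4%N ->
  v \notin residue C ->
  doubly_even (gen_code (residue C) v) ->
  exists C' : {set 'rV['Z_4]_n},
    extremal_typeII C' /\ residue C' = gen_code (residue C) v.
Proof.
move=> n_in [[C_sd C_typeII] [C_min _]] v_wt v_notin gen_de.
have d16 : (8 * (n %/ 24) + 8 = 16)%N by move: n_in; rewrite !inE => /or3P[] /eqP ->.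
exists (neighbour C v); split; last exact: residue_neighbour.
split; first exact: neighbour_typeII.
rewrite d16 in C_min *; split.
  by apply: (neighbour_min_wt C_sd v_notin gen_de C_typeII v_wt _ C_min).
have [vvN vv] := double_v_neighbour C_sd gen_de v_wt.
by exists (lift2v v + lift2v v).
Qed.
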